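(* Let $d\ge2$ and $p=(\sqrt d+1)^{-1}$, and consider $\mathcal{C}_{\mathrm{PP}},\mathcal{C}_{\mathrm{s}}$ with this $p$ and $\mathcal{C}_{\mathrm{q}}$ (all with variance constant $\omega=\sqrt d$). For a symmetric positive definite $M$ and a random vector $E$ with $\mathbb{E}[EE^\top]=M$ independent of the compression randomness, let $\mathfrak{C}(\mathcal{C},M):=\mathbb{E}[\mathcal{C}(E)\mathcal{C}(E)^\top]$ for $\mathcal{C}\in\{\mathcal{C}_{\mathrm{PP}},\mathcal{C}_{\mathrm{s}}\}$, and $\widetilde{\mathfrak{C}}(\mathcal{C}_{\mathrm{q}},M):=M+\sqrt{\mathrm{Tr}(M)}\sqrt{\mathrm{Diag}(M)}-\mathrm{Diag}(M)$. (1) If $M$ is diagonal: $\mathrm{Tr}(\mathfrak{C}(\mathcal{C}_{\mathrm{PP}},M)M^{-1})=\mathrm{Tr}(\mathfrak{C}(\mathcal{C}_{\mathrm{s}},M)M^{-1})\le(1+\frac1{\sqrt d})\mathrm{Tr}(\widetilde{\mathfrak{C}}(\mathcal{C}_{\mathrm{q}},M)M^{-1})$. (2) If $M$ has constant diagonal: $\widetilde{\mathfrak{C}}(\mathcal{C}_{\mathrm{q}},M)\preccurlyeq\mathfrak{C}(\mathcal{C}_{\mathrm{s}},M)$ and $\mathrm{Tr}(\mathfrak{C}(\mathcal{C}_{\mathrm{PP}},M)M^{-1})\le(1+\frac1{\sqrt d})\mathrm{Tr}(\widetilde{\mathfrak{C}}(\mathcal{C}_{\mathrm{q}},M)M^{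-1})$.
   Context: $\mathcal{C}_{\mathrm{q}}(z)=\|z\|\mathrm{sign}(z)\odot\chi$ with $\chi_i\sim\mathrm{Bern}(|z_i|/\|z\|)$ independent; $\mathcal{C}_{\mathrm{s}}(z)=\frac1pB\odot z$, $B_i$ i.i.d. $\mathrm{Bern}(p)$; $\mathcal{C}_{\mathrm{PP}}(z)=\frac{b_0}pz$, $b_0\sim\mathrm{Bern}(p)$. $\mathrm{Diag}(M)$ is the diagonal part of $M$ and its square root is entrywise. ($\widetilde{\mathfrak{C}}(\mathcal{C}_{\mathrm{q}},M)$ is an upper bound on the covariance of $\mathcal{C}_{\mathrm{q}}(E)$.) *)

From HB Require Import structures.
From mathcomp Require Import all_boot all_order all_algebra.
From mathcomp Require Import all_classical all_reals all_analysis.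
Set Implicit Arguments. Unset Strict Implicit. Unset Printing Implicit Defensive.
Import Order.TTheory GRing.Theory Num.Theory.
Local Open Scope ring_scope.

Section Defs.
Context {R : realType} {d : nat}.

Definition spd (M : 'M[R]_d) : Prop :=
  M^T = M /\ forall x : 'cV[R]_d, x != 0 -> 0 < (x^T *m M *m x) 0 0.

Definition loewner_le (A B : 'M[R]_d) : Prop :=
  forall x : 'cV[R]_d, 0 <= (x^T *m (B - A) *m x) 0 0.

Definition Diag (M : 'M[R]_d) : 'M[R]_d := diag_mx (\row_i M i i).
Definition sqrtDiag (M : 'M[R]_d) : 'M[R]_d := diag_mx (\row_i Num.sqrt (M i i)).

Definition tildeCq (M : 'M[R]_d) : 'M[R]_d :=
  M + Num.sqrt (\tr M) *: sqrtDiag M - Diag M.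

(** Compressors, given as (finite) randomness outcome -> map, with outcome law. *)
Definition CPP (p : R) (b0 : bool) (z : 'cV[R]_d) : 'cV[R]_d :=
  ((if b0 then 1 else 0) / p) *: z.
Definition wPP (p : R) (b0 : bool) : R := if b0 then p else 1 - p.
Definition Cs (p : R) (B : {ffun 'I_d -> bool}) (z : 'cV[R]_d) : 'cV[R]_d :=
  p^-1 *: \col_i ((if B i then 1 else 0) * z i 0).
Definition ws (p : R) (B : {ffun 'I_d -> bool}) : R :=
  \prod_i (if B i then p else 1 - p).

Definition comp_moment (Om : finType) (w : Om -> R)
    (C : Om -> 'cV[R]_d -> 'cV[R]_d) (z : 'cV[R]_d) : 'M[R]_d :=
  \sum_(o : Om) w o *: (C o z *m (C o z)^T).

Definition vecE {dT} {T : measurableType dT} (P : probability T R)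
    (X : 'I_d -> {RV P >-> R}) (t : T) : 'cV[R]_d := \col_i X i t.

Definition second_moment {dT} {T : measurableType dT} (P : probability T R)
    (X : 'I_d -> {RV P >-> R}) (M : 'M[R]_d) : Prop :=
  forall i j, P.-integrable setT (fun t => (X i t * X j t)%:E) /\
              ('E_P[fun t => (X i t * X j t)%R])%E = (M i j)%:E.

(** frakC(C, M) = E[C(E) C(E)^T], with E independent of the compression
    randomness: iterated expectation (outer over E, inner over compression). *)
Definition frakC {dT} {T : measurableType dT} (P : probability T R)
    (X : 'I_d -> {RV P >-> R}) (Om : finType) (w : Om -> R)
    (C : Om -> 'cV[R]_d -> 'cV[R]_d) : 'M[R]_d :=
  \matrix_(i, j) fine ('E_P[fun t => (comp_moment w C (vecE X t) i j)%R])%E.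

End Defs.

From HB Require Import structures.
From mathcomp Require Import all_boot all_order all_algebra.
From mathcomp Require Import all_classical all_reals all_analysis.
From mathcomp Require Import ring.
Import Order.TTheory GRing.Theory Num.Theory.
Local Open Scope ring_scope.

(* With 1/p = sqrt d + 1, C_PP scales the whole second moment by 1/p while C_s
   scales only its diagonal (independent coordinates of B give E[B_i B_j] = p^2
   off the diagonal), so frakC(C_PP) = (sqrt d + 1) M and
   frakC(C_s) = M + sqrt d Diag(M); both have trace d (sqrt d + 1) against M^-1
   when M is diagonal.  It remains to show Tr(tildeC M^-1) >= d sqrt d.
   For M = diag(a_i^2) this trace is |a| * sum_i 1/a_i, bounded below by
   Cauchy-Schwarz and AM-HM.  For a constant diagonal c, frakC(C_s) - tildeC = c I
   and the trace is d + (sqrt d - 1) c Tr(M^-1), where c (M^-1)_ii >= 1 for any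
   SPD M. *)

Section FiniteSumInequalities.
Context {n : nat}.

Lemma double_sum_ge0_sym {R : numDomainType} (F : 'I_n -> 'I_n -> R) :
  (forall i j, 0 <= F i j + F j i) -> 0 <= \sum_i \sum_j F i j.
Proof.
move=> F_ge0; rewrite -(pmulrn_lge0 _ (isT : (0 < 2)%N)) mulr2n.
rewrite [X in _ + X]exchange_big -big_split /=; apply: sumr_ge0 => i _.
by rewrite -big_split; apply: sumr_ge0 => j _; apply: F_ge0.
Qed.

Lemma sqr_sum_le {R : realDomainType} (a : 'I_n -> R) :
  (\sum_i a i) ^+ 2 <= n%:R * \sum_i a i ^+ 2.
Proof.
rewrite -subr_ge0.
have -> : n%:R * \sum_i a i ^+ 2 - (\sum_i a i) ^+ 2 =
          \sum_i \sum_j (a j ^+ 2 - a i * a j).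
  under [RHS]eq_bigr do rewrite sumrB -mulr_sumr.
  by rewrite sumrB sumr_const card_ord -mulr_suml mulr_natl expr2.
apply: double_sum_ge0_sym => i j.
have -> : a j ^+ 2 - a i * a j + (a i ^+ 2 - a j * a i) = (a i - a j) ^+ 2.
  by ring.
exact: sqr_ge0.
Qed.

Lemma sum_mul_sum_inv_ge {R : realFieldType} (a : 'I_n -> R) :
  (forall i, 0 < a i) -> n%:R ^+ 2 <= (\sum_i a i) * \sum_i (a i)^-1.
Proof.
move=> a_gt0; rewrite -subr_ge0.
have -> : (\sum_i a i) * (\sum_i (a i)^-1) - n%:R ^+ 2 =
          \sum_i \sum_j (a i / a j - 1).
  under [RHS]eq_bigr do rewrite sumrB -mulr_sumr sumr_const card_ord.
  by rewrite sumrB sumr_const card_ord -mulr_suml expr2 mulr_natr.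
apply: double_sum_ge0_sym => i j.
have ai_neq0 := lt0r_neq0 (a_gt0 i); have aj_neq0 := lt0r_neq0 (a_gt0 j).
have -> : a i / a j - 1 + (a j / a i - 1) = (a i - a j) ^+ 2 / (a i * a j).
  by field; rewrite aj_neq0.
by rewrite divr_ge0 ?sqr_ge0 // mulr_ge0 // ltW.
Qed.

Lemma sqrt_sum_sqr_mul_sum_inv_ge {R : rcfType} (a : 'I_n -> R) :
  (forall i, 0 < a i) ->
  n%:R * Num.sqrt n%:R <= Num.sqrt (\sum_i a i ^+ 2) * \sum_i (a i)^-1.
Proof.
move=> a_gt0; set s := Num.sqrt _; set Q := Num.sqrt _; set H := \sum_i _.
have H_ge0 : 0 <= H by apply: sumr_ge0 => i _; rewrite invr_ge0 ltW.
have [s_eq0|s_neq0] := eqVneq s 0.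
  by rewrite s_eq0 mulr0 mulr_ge0 ?sqrtr_ge0.
have s_gt0 : 0 < s by rewrite lt_def s_neq0 sqrtr_ge0.
have sum_le : \sum_i a i <= s * Q.
  have sum_ge0 : 0 <= \sum_i a i by apply: sumr_ge0 => i _; apply: ltW.
  rewrite -sqrtrM ?ler0n // -(ger0_norm sum_ge0) -sqrtr_sqr.
  rewrite ler_sqrt ?sqr_sum_le //.
  by rewrite mulr_ge0 ?ler0n ?sumr_ge0 // => i _; apply: sqr_ge0.
rewrite -(ler_pM2l s_gt0) mulrCA -expr2 sqr_sqrtr ?ler0n // -expr2 mulrA.
exact: le_trans (sum_mul_sum_inv_ge _ a_gt0) (ler_wpM2r H_ge0 sum_le).
Qed.

End FiniteSumInequalities.

Section PositiveDefinite.
Context {R : realType} {n : nat}.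
Implicit Types (M : 'M[R]_n).

Lemma spd_form_ge0 (x : 'cV[R]_n) M : spd M -> 0 <= (x^T *m M *m x) 0 0.
Proof.
case=> _ M_pos; have [->|x_neq0] := eqVneq x 0.
  by rewrite trmx0 !mul0mx mxE.
exact/ltW/M_pos.
Qed.

Lemma spd_diag_gt0 M i : spd M -> 0 < M i i.
Proof.
case=> _ M_pos; have := M_pos (delta_mx i 0).
rewrite trmx_delta -rowE -colE !mxE; apply.
apply/negP => /eqP/matrixP/(_ i 0); rewrite !mxE !eqxx /=.
by move/eqP; rewrite oner_eq0.
Qed.

Lemma spd_unitmx M : spd M -> M \in unitmx.
Proof.
case=> _ M_pos; rewrite -row_free_unit -kermx_eq0.
apply/eqP/row_matrixP => r; apply/eqP; apply/negPn/negP => r_neq0.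
suff /M_pos : (row r (kermx M))^T != 0.
  by rewrite trmxK -row_mul mulmx_ker row0 mul0mx mxE ltxx.
by apply: contra r_neq0 => /eqP r0; rewrite row0 -[row r _]trmxK r0 trmx0.
Qed.

(* Evaluate the form at [x = N_ii e_i - N e_i] with [N = M^-1]: [x_i = 0] and
   [M x = N_ii M e_i - e_i], so [0 <= x^T M x = N_ii (N_ii M_ii - 1)]. *)
Lemma spd_diag_mul_invmx_ge1 M i : spd M -> 1 <= M i i * invmx M i i.
Proof.
move=> M_spd; have M_unit : M \in unitmx by apply: spd_unitmx.
have [M_sym M_pos] := M_spd.
set N := invmx M; set e : 'cV[R]_n := delta_mx i 0; set u := N *m e.
have Mu : M *m u = e by rewrite mulmxA mulmxV // mul1mx.
have uMx (y : 'cV[R]_n) : (u^T *m M *m y) 0 0 = y i 0.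
  by rewrite -[M in u^T *m M]M_sym -trmx_mul Mu trmx_delta -rowE mxE.
have eMx (y : 'cV[R]_n) : (e^T *m M *m y) 0 0 = (M *m y) i 0.
  by rewrite -mulmxA trmx_delta -rowE mxE.
have ui : u i 0 = N i i by rewrite /u /e -colE mxE.
have N_gt0 : 0 < N i i.
  rewrite -ui -uMx; apply: M_pos; apply/eqP => u0.
  move: Mu; rewrite u0 mulmx0 => /matrixP/(_ i 0); rewrite !mxE !eqxx /=.
  by move/eqP; rewrite eq_sym oner_eq0.
set x := N i i *: e - u.
have xi : x i 0 = 0.
  by rewrite [LHS]mxE mxE [(- u) i 0]mxE ui mxE !eqxx mulr1 subrr.
have Mxi : (M *m x) i 0 = N i i * M i i - 1.
  by rewrite mulmxBr -scalemxAr Mu /e -colE !mxE !eqxx.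
have : 0 <= (x^T *m M *m x) 0 0 by apply: spd_form_ge0.
have -> : x^T *m M *m x = N i i *: (e^T *m M *m x) - u^T *m M *m x.
  rewrite {1}/x [(_ - _)^T]linearB /= [(_ *: _)^T]linearZ /=.
  by rewrite mulmxBl mulmxBl -!scalemxAl.
move: (eMx x) (uMx x); rewrite Mxi xi.
move: (e^T *m M *m x) (u^T *m M *m x) => A B eA eB.
by rewrite !mxE eA eB subr0 pmulr_rge0 // subr_ge0 mulrC.
Qed.

End PositiveDefinite.

Section DiagonalParts.
Context {R : realType} {n : nat}.
Implicit Types (M : 'M[R]_n) (c : R).

Lemma mxtrace_diag_mul (r : 'rV[R]_n) (N : 'M[R]_n) :
  \tr (diag_mx r *m N) = \sum_i r 0 i * N i i.
Proof. by rewrite mul_diag_mx; apply: eq_bigr => i _; rewrite mxE. Qed.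

Lemma Diag_diag M : is_diag_mx M -> Diag M = M.
Proof.
move=> /is_diag_mxP M_diag; apply/matrixP => i j; rewrite !mxE.
by have [->|ij] := eqVneq i j; rewrite ?mulr1n // mulr0n M_diag.
Qed.

Lemma Diag_const {M c} : (forall i, M i i = c) -> Diag M = c%:M.
Proof. by move=> Mc; apply/matrixP => i j; rewrite !mxE Mc. Qed.

Lemma diag_mul_invmx M i :
  is_diag_mx M -> M \in unitmx -> M i i * invmx M i i = 1.
Proof.
move=> /is_diag_mxP M_diag M_unit.
have /matrixP/(_ i i) := mulmxV M_unit; rewrite !mxE eqxx mulr1n => <-.
rewrite (bigD1 i) //= big1 ?addr0 // => k k_neq_i.
by rewrite M_diag ?mul0r // eq_sym.
Qed.

Lemma tildeCq_diag M : is_diag_mx M -> tildeCq M = Num.sqrt (\tr M) *: sqrtDiag M.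
Proof. by move=> M_diag; rewrite /tildeCq Diag_diag // addrAC subrr add0r. Qed.

Lemma tildeCq_const_diag {M c} : 0 <= c -> (forall i, M i i = c) ->
  tildeCq M = M + ((Num.sqrt n%:R - 1) * c)%:M.
Proof.
move=> c_ge0 Mc; have trM : \tr M = n%:R * c.
  by rewrite /mxtrace (eq_bigr (fun=> c)) // sumr_const card_ord mulr_natl.
have sqrt_trM : Num.sqrt (\tr M) * Num.sqrt c = Num.sqrt n%:R * c.
  by rewrite trM sqrtrM ?ler0n // -mulrA -expr2 sqr_sqrtr.
apply/matrixP => i j; rewrite !mxE Mc.
by case: (i == j); rewrite ?mulr1n ?mulr0n ?sqrt_trM; ring.
Qed.

Lemma loewner_le_addr_scalar (A : 'M[R]_n) c : 0 <= c -> loewner_le A (A + c%:M).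
Proof.
move=> c_ge0 x; rewrite addrC addKr mul_mx_scalar -scalemxAl !mxE.
by rewrite mulr_ge0 // sumr_ge0 // => k _; rewrite !mxE -expr2 sqr_ge0.
Qed.

End DiagonalParts.

Section TildeCqTraceBounds.
Context {R : realType} {n : nat}.
Implicit Types (M : 'M[R]_n).

Lemma mxtrace_tildeCq_mulV_diag M : spd M -> is_diag_mx M ->
  n%:R * Num.sqrt n%:R <= \tr (tildeCq M *m invmx M).
Proof.
move=> M_spd M_diag; set a := fun i => Num.sqrt (M i i).
have a_gt0 i : 0 < a i by rewrite sqrtr_gt0 spd_diag_gt0.
have M_a i : M i i = a i ^+ 2 by rewrite sqr_sqrtr // ltW // spd_diag_gt0.
have invM_a i : invmx M i i = (a i ^+ 2)^-1.
  have Mii_neq0 : M i i != 0 by rewrite gt_eqF // spd_diag_gt0.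
  rewrite -M_a -[invmx M i i](mulKf Mii_neq0) diag_mul_invmx ?mulr1 //.
  exact: spd_unitmx.
rewrite tildeCq_diag // -scalemxAl mxtraceZ mxtrace_diag_mul.
have -> : \tr M = \sum_i a i ^+ 2 by apply: eq_bigr => i _; rewrite M_a.
rewrite [X in _ <= _ * X](eq_bigr (fun i => (a i)^-1)) => [|i _].
  exact: sqrt_sum_sqr_mul_sum_inv_ge.
by rewrite mxE invM_a expr2 invfM mulrA mulfV ?mul1r // lt0r_neq0 ?a_gt0.
Qed.

Lemma mxtrace_tildeCq_mulV_const M c :
  (0 < n)%N -> spd M -> (forall i, M i i = c) ->
  n%:R * Num.sqrt n%:R <= \tr (tildeCq M *m invmx M).
Proof.
move=> n_gt0 M_spd Mc; set s := Num.sqrt n%:R.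
have c_gt0 : 0 < c by rewrite -(Mc (Ordinal n_gt0)) spd_diag_gt0.
have s_ge1 : 1 <= s by rewrite -sqrtr1 ler_sqrt ?ler1n.
have trN_ge : n%:R <= c * \tr (invmx M).
  have -> : n%:R = \sum_(i < n) (1 : R) by rewrite sumr_const card_ord.
  rewrite /mxtrace mulr_sumr; apply: ler_sum => i _.
  by rewrite -(Mc i) spd_diag_mul_invmx_ge1.
rewrite (tildeCq_const_diag (ltW c_gt0) Mc) mulmxDl mxtraceD.
rewrite mulmxV ?spd_unitmx // mxtrace1 mul_scalar_mx mxtraceZ -mulrA -subr_ge0.
have -> : n%:R + (s - 1) * (c * \tr (invmx M)) - n%:R * s =
          (s - 1) * (c * \tr (invmx M) - n%:R) by ring.
by rewrite mulr_ge0 // subr_ge0.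
Qed.

End TildeCqTraceBounds.

Section CompressorMoments.
Context {R : realType} {n : nat}.
Variable p : R.

Lemma comp_moment_CPP (z : 'cV[R]_n) i j : p != 0 ->
  comp_moment (wPP p) (CPP p) z i j = p^-1 * (z i 0 * z j 0).
Proof.
move=> p_neq0; rewrite /comp_moment summxE big_bool /wPP /CPP /= !mxE.
by rewrite !big_ord1 !mxE; field.
Qed.

Lemma sum_ws_mul_prod (f : 'I_n -> bool -> R) :
  \sum_(B : {ffun 'I_n -> bool}) ws p B * \prod_k f k (B k) =
  \prod_k (p * f k true + (1 - p) * f k false).
Proof.
rewrite (eq_bigr (fun k => \sum_b wPP p b * f k b)) => [|k _]; last first.
  by rewrite big_bool.
by rewrite bigA_distr_bigA; apply: eq_bigr => B _; rewrite big_split.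
Qed.

Lemma sum_ws_indicator_pair i j :
  \sum_(B : {ffun 'I_n -> bool})
     ws p B * ((if B i then 1 else 0) * (if B j then 1 else 0)) =
  if i == j then p else p ^+ 2.
Proof.
pose f k (b : bool) : R :=
  (if k == i then if b then 1 else 0 else 1) *
  (if k == j then if b then 1 else 0 else 1).
transitivity (\sum_(B : {ffun 'I_n -> bool}) ws p B * \prod_k f k (B k)).
  by apply: eq_bigr => B _; rewrite big_split /= -!big_mkcond !big_pred1_eq.
rewrite sum_ws_mul_prod.
rewrite (eq_bigr (fun k => if pred2 i j k then p else 1)) => [|k _].
  by rewrite -big_mkcond prodr_const card2; case: eqVneq.
by rewrite /f /=; case: (k == i); case: (k == j); rewrite /=; ring.
Qed.

Lemma comp_moment_Cs (z : 'cV[R]_n) i j : p != 0 ->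
  comp_moment (ws p) (Cs p) z i j =
  (if i == j then p^-1 else 1) * (z i 0 * z j 0).
Proof.
move=> p_neq0; rewrite /comp_moment summxE.
transitivity (\sum_(B : {ffun 'I_n -> bool})
    ws p B * ((if B i then 1 else 0) * (if B j then 1 else 0)) *
    (p^-1 * p^-1 * (z i 0 * z j 0))).
  by apply: eq_bigr => B _; rewrite /Cs !mxE big_ord1 !mxE; ring.
by rewrite -mulr_suml sum_ws_indicator_pair; case: eqP => _; field.
Qed.

End CompressorMoments.

Section CompressedSecondMoments.
Context {R : realType} {n : nat} {dT : measure_display} {T : measurableType dT}.
Context {P : probability T R} {X : 'I_n -> {RV P >-> R}} {M : 'M[R]_n}.
Hypothesis XM : second_moment X M.

Lemma frakC_entrywise (Om : finType) (w : Om -> R)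
    (C : Om -> 'cV[R]_n -> 'cV[R]_n) (K : 'I_n -> 'I_n -> R) :
  (forall z i j, comp_moment w C z i j = K i j * (z i 0 * z j 0)) ->
  frakC X w C = \matrix_(i, j) (K i j * M i j).
Proof.
move=> CK; apply/matrixP => i j; rewrite !mxE.
have [XX_int XX_E] := XM i j.
under eq_fun do rewrite CK /vecE !mxE.
have -> : (fun t => K i j * (X i t * X j t)) = K i j \o* (fun t => X i t * X j t).
  by apply/funext => t /=; rewrite mulrC.
by rewrite expectationZl ?XX_E //; apply/Lfun1_integrable.
Qed.

Lemma frakC_CPP p : p != 0 -> frakC X (wPP p) (CPP p) = p^-1 *: M.
Proof.
move=> p_neq0; rewrite (@frakC_entrywise _ _ _ (fun _ _ => p^-1)).
  by apply/matrixP => i j; rewrite !mxE.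
by move=> z i j; apply: comp_moment_CPP.
Qed.

Lemma frakC_Cs p : p != 0 -> frakC X (ws p) (Cs p) = M + (p^-1 - 1) *: Diag M.
Proof.
move=> p_neq0.
rewrite (@frakC_entrywise _ _ _ (fun i j => if i == j then p^-1 else 1)).
  apply/matrixP => i j; rewrite !mxE.
  by case: eqVneq => [->|_]; rewrite ?mulr1n ?mulr0n; ring.
by move=> z i j; apply: comp_moment_Cs.
Qed.

End CompressedSecondMoments.

Theorem proposition4 (R : realType) (d : nat) (dT : measure_display)
    (T : measurableType dT) (P : probability T R)
    (M : 'M[R]_d) (X : 'I_d -> {RV P >-> R}) :
  (2 <= d)%N -> spd M -> second_moment X M ->
  let p := (Num.sqrt (d%:R : R) + 1)^-1 in
  let CPPM := frakC X (wPP p) (CPP p) in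
  let CsM := frakC X (ws p) (Cs p) in
  let CqM := tildeCq M in
  (is_diag_mx M ->
     \tr (CPPM *m invmx M) = \tr (CsM *m invmx M) /\
     \tr (CsM *m invmx M)
       <= (1 + (Num.sqrt (d%:R : R))^-1) * \tr (CqM *m invmx M)) /\
  ((exists c : R, forall i, M i i = c) ->
     loewner_le CqM CsM /\
     \tr (CPPM *m invmx M)
       <= (1 + (Num.sqrt (d%:R : R))^-1) * \tr (CqM *m invmx M)).
Proof.
move=> d_ge2 M_spd XM p CPPM CsM CqM; set s := Num.sqrt (d%:R : R).
have d_gt0 : (0 < d)%N by apply: leq_trans d_ge2.
have s_gt0 : 0 < s by rewrite sqrtr_gt0 ltr0n.
have p_neq0 : p != 0 by rewrite invr_eq0 gt_eqF // addr_gt0.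
have CPPE : CPPM = (s + 1) *: M by rewrite /CPPM (frakC_CPP XM) // invrK.
have CsE : CsM = M + s *: Diag M by rewrite /CsM (frakC_Cs XM) // invrK addrK.
have trCPP : \tr (CPPM *m invmx M) = (1 + s^-1) * (d%:R * s).
  rewrite CPPE -scalemxAl mxtraceZ mulmxV ?spd_unitmx // mxtrace1.
  by field; rewrite gt_eqF.
have factor_ge0 : 0 <= 1 + s^-1 by rewrite addr_ge0 // invr_ge0 ltW.
split=> [M_diag | [c Mc]].
  have CsCPP : CsM = CPPM.
    by rewrite CsE CPPE Diag_diag // scalerDl scale1r addrC.
  rewrite CsCPP trCPP; split=> //.
  by apply: ler_wpM2l => //; apply: mxtrace_tildeCq_mulV_diag.
have c_ge0 : 0 <= c by rewrite -(Mc (Ordinal d_gt0)) ltW ?spd_diag_gt0.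
split; last first.
  by rewrite trCPP; apply: ler_wpM2l => //; apply: mxtrace_tildeCq_mulV_const Mc.
have -> : CsM = CqM + c%:M.
  rewrite CsE (Diag_const Mc) /CqM (tildeCq_const_diag c_ge0 Mc) -/s.
  apply/matrixP => i j; rewrite !mxE.
  by case: (i == j); rewrite ?mulr1n ?mulr0n; ring.
exact: loewner_le_addr_scalar.
Qed.
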